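(* Let $K$ be a convex body in $\mathbb{R}^d$ with $o\in\mathrm{int}(K)$, let $\varepsilon\ge0$, and let $v_1+\lambda_1K$, $v_2+\lambda_2K$ be positive homothets of $K$ with $\lambda_1,\lambda_2\ge1$, $v_1\notin v_2+\lambda_2\,\mathrm{int}(K)$, $v_2\notin v_1+\lambda_1\,\mathrm{int}(K)$, and for $i=1,2$: $o\notin v_i+\lambda_i\,\mathrm{int}(K)$ and $(v_i+\lambda_iK)\cap(-\varepsilon K)\ne\emptyset$. Then \[\left\|\frac{-v_1}{\|-v_1\|_K}-\frac{-v_2}{\|-v_2\|_K}\right\|_{K\cap-K}\ge1-\varepsilon.\]
   Context: A convex body is a compact convex set with non-empty interior. For a convex body $L$ with $o\in\mathrm{int}(L)$, $\|x\|_L=\inf\{\mu>0:x\in\mu L\}$; in particular $\|x\|_{K\cap -K}=\max\{\|x\|_K,\|-x\|_K\}$. *)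

From HB Require Import structures.
From mathcomp Require Import all_boot all_order all_algebra.
From mathcomp Require Import all_classical all_reals all_analysis.
Set Implicit Arguments. Unset Strict Implicit. Unset Printing Implicit Defensive.
Import Order.TTheory GRing.Theory Num.Theory.
Import numFieldNormedType.Exports.
Local Open Scope classical_set_scope.
Local Open Scope ring_scope.

Definition convex_body (R : realType) (d : nat) (K : set 'rV[R]_d) : Prop :=
  compact K /\ convex_set (K : set (convex_lmodType 'rV[R]_d)) /\ (interior K) !=set0.

Definition homothet (R : realType) (d : nat) (v : 'rV[R]_d) (lam : R)
  (A : set 'rV[R]_d) : set 'rV[R]_d :=
  [set v + lam *: y | y in A].

Definition gauge (R : realType) (d : nat) (L : set 'rV[R]_d) (x : 'rV[R]_d) : R :=
  inf [set mu : R | 0 < mu /\ homothet 0 mu L x].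

From HB Require Import structures.
From mathcomp Require Import all_boot all_order all_algebra.
From mathcomp Require Import all_classical all_reals all_analysis.
From mathcomp Require Import lra ring.
Set Implicit Arguments. Unset Strict Implicit. Unset Printing Implicit Defensive.
Import Order.TTheory GRing.Theory Num.Theory.
Import numFieldNormedType.Exports.
Local Open Scope classical_set_scope.
Local Open Scope ring_scope.

(* For a convex K with o in int K the gauge ||.||_K is sublinear, and
   ||x||_K < t forces x into t int K.  Hence the hypotheses on the homothets
   give lam_i <= ||-v_i||_K <= lam_i + eps and ||v_2 - v_1||_K >= lam_1.
   Put w_i = -v_i, n_i = ||w_i||_K, u = w_1/n_1 - w_2/n_2, and say n_2 <= n_1.
   From w_1 - w_2 = n_2 u + (1 - n_2/n_1) w_1 and sublinearity,
   lam_1 <= n_2 ||u||_K + n_1 - n_2 <= n_2 ||u||_K + lam_1 + eps - n_2,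
   so ||u||_K >= 1 - eps/n_2 >= 1 - eps.  In the other case the same argument
   bounds ||-u||_K, and ||u||_{K cap -K} dominates both ||u||_K and ||-u||_K. *)

Lemma homothet0P (R : realType) (d : nat) (L : set 'rV[R]_d) mu x :
  homothet 0 mu L x <-> exists2 y, L y & x = mu *: y.
Proof.
by split=> [[y Ly <-]|[y Ly ->]]; exists y; rewrite ?add0r.
Qed.

Lemma homothetE (R : realType) (d : nat) (v x : 'rV[R]_d) lam L :
  homothet v lam L x <-> homothet 0 lam L (x - v).
Proof.
split=> [[y Ly <-]|[y Ly yE]]; exists y => //.
  by rewrite add0r addrC addKr.
by rewrite add0r in yE; rewrite yE addrC subrK.
Qed.

Lemma interior0_ball (R : realType) (d : nat) (L : set 'rV[R]_d) :
  interior L 0 -> exists2 r : R, 0 < r & forall e, `|e| < r -> L e.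
Proof.
move=> /nbhs_ballP [r r0 rL]; exists r => // e er; apply: rL.
by rewrite -ball_normE /ball_ /= sub0r normrN.
Qed.

Lemma interior0_homothetN1 (R : realType) (d : nat) (L : set 'rV[R]_d) :
  interior L 0 -> interior (homothet 0 (-1) L) 0.
Proof.
move=> /nbhs_ballP [r r0 rL]; apply/nbhs_ballP; exists r => // e er.
apply/homothet0P; exists (- e); last by rewrite scaleN1r opprK.
by apply: rL; move: er; rewrite -!ball_normE /ball_ /= !sub0r opprK normrN.
Qed.

Lemma gauge_le (R : realType) (d : nat) (L : set 'rV[R]_d) x mu :
  0 < mu -> homothet 0 mu L x -> gauge L x <= mu.
Proof. by move=> mu0 Lx; apply: ge_inf => //; exists 0 => s [/ltW]. Qed.

Lemma interior0_absorbing (R : realType) (d : nat) (L : set 'rV[R]_d) x :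
  interior L 0 -> [set mu : R | 0 < mu /\ homothet 0 mu L x] !=set0.
Proof.
move=> /interior0_ball [r r0 rL]; set mu := (`|x| + 1) / r.
have mu0 : 0 < mu by rewrite divr_gt0 // ltr_wpDl.
exists mu; split => //; apply/homothet0P; exists (mu^-1 *: x).
  apply: rL; rewrite normrZ ger0_norm ?invr_ge0 ?ltW // /mu invf_div.
  by rewrite mulrAC ltr_pdivrMr ?ltr_wpDl // ltr_pM2l // ltrDl.
by rewrite scalerA divff ?gt_eqF // scale1r.
Qed.

Lemma gauge_ge0 (R : realType) (d : nat) (L : set 'rV[R]_d) x :
  interior L 0 -> 0 <= gauge L x.
Proof.
by move=> L0; apply: lb_le_inf; [exact: interior0_absorbing|move=> s [/ltW]].
Qed.

Lemma gauge_ltP (R : realType) (d : nat) (L : set 'rV[R]_d) x t :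
  interior L 0 -> gauge L x < t ->
  exists mu, [/\ 0 < mu, mu < t & homothet 0 mu L x].
Proof.
by move=> L0 /(inf_lt (interior0_absorbing x L0)) [mu [mu0 Lx] mut]; exists mu.
Qed.

Lemma gauge_le_homothet (R : realType) (d : nat) (L : set 'rV[R]_d) x t :
  0 <= t -> (forall s, t < s -> homothet 0 s L x) -> gauge L x <= t.
Proof.
move=> t0 Lx; apply/ler_addgt0Pr => e e0.
by apply: gauge_le; [rewrite ltr_wpDl|apply: Lx; rewrite ltrDl].
Qed.

Lemma le_gauge_subset (R : realType) (d : nat) (L M : set 'rV[R]_d) x :
  L `<=` M -> interior L 0 -> gauge M x <= gauge L x.
Proof.
move=> LM L0; apply: lb_le_inf; first exact: interior0_absorbing.
move=> mu [mu0 /homothet0P [y /LM My ->]].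
by apply: gauge_le => //; apply/homothet0P; exists y.
Qed.

Lemma gauge_homothetN1 (R : realType) (d : nat) (L : set 'rV[R]_d) x :
  gauge (homothet 0 (-1) L) x = gauge L (- x).
Proof.
congr inf; apply/seteqP; split=> mu [mu0 Lx]; split=> //; move: Lx.
  move=> /homothet0P [_ /homothet0P [y Ly ->] ->].
  by apply/homothet0P; exists y; rewrite // scalerA mulrN1 scaleNr opprK.
move=> /homothet0P [y Ly /(canRL opprK) ->]; apply/homothet0P.
by exists (- y); [apply/homothet0P; exists y; rewrite ?scaleN1r|rewrite scalerN].
Qed.

Lemma gauge_symmetric_part_ge (R : realType) (d : nat) (L : set 'rV[R]_d) x :
  interior L 0 ->
  Num.max (gauge L x) (gauge L (- x)) <= gauge (L `&` homothet 0 (-1) L) x.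
Proof.
move=> L0; have LNL0 : interior (L `&` homothet 0 (-1) L) 0.
  by rewrite interiorI; split; last exact: interior0_homothetN1.
rewrite ge_max -gauge_homothetN1.
by apply/andP; split; apply: le_gauge_subset => // y [].
Qed.

Section ConvexGauge.
Variables (R : realType) (d : nat) (K : set 'rV[R]_d).
Hypotheses (convK : convex_set (K : set (convex_lmodType 'rV[R]_d)))
  (K0 : interior K 0).

Lemma mem_convex_comb (x y : 'rV[R]_d) t :
  K x -> K y -> 0 <= t -> t <= 1 -> K (t *: x + (1 - t) *: y).
Proof.
by move=> Kx Ky t0 t1; have := convK (Itv01 t0 t1) (mem_set Kx) (mem_set Ky); rewrite inE.
Qed.

Lemma interior_scale y c : K y -> 0 <= c -> c < 1 -> interior K (c *: y).
Proof.
move=> Ky c0 c1; have [r r0 rK] := interior0_ball K0.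
have c'0 : 0 < 1 - c by rewrite subr_gt0.
apply/nbhs_ballP; exists ((1 - c) * r); first exact: mulr_gt0.
move=> w; rewrite -ball_normE /ball_ /= => wr.
have -> : w = c *: y + (1 - c) *: ((1 - c)^-1 *: (w - c *: y)).
  by rewrite scalerA divff ?gt_eqF // scale1r addrC subrK.
apply: mem_convex_comb => //; [apply: rK|exact: ltW].
rewrite normrZ ger0_norm ?invr_ge0 ?ltW // distrC.
by rewrite mulrC -ltr_pdivlMr ?invr_gt0 // invrK mulrC.
Qed.

Lemma gauge_lt_interior x t :
  gauge K x < t -> homothet 0 t (interior K) x.
Proof.
move=> /(gauge_ltP K0) [mu [mu0 mut /homothet0P [y Ky ->]]].
have t0 : 0 < t by apply: lt_trans mut.
apply/homothet0P; exists ((mu / t) *: y).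
  by apply: interior_scale; rewrite ?divr_ge0 ?ltW // ltr_pdivrMr // mul1r.
by rewrite scalerA mulrCA divff ?gt_eqF // mulr1.
Qed.

Lemma gauge_ge x t : ~ homothet 0 t (interior K) x -> t <= gauge K x.
Proof. by move=> xNtK; rewrite leNgt; apply/negP => /gauge_lt_interior. Qed.

Lemma gauge_lt_homothet x t : gauge K x < t -> homothet 0 t K x.
Proof.
move=> /gauge_lt_interior /homothet0P [y /interior_subset Ky ->].
by apply/homothet0P; exists y.
Qed.

Lemma gauge_le1 x : K x -> gauge K x <= 1.
Proof. by move=> Kx; apply: gauge_le => //; apply/homothet0P; exists x; rewrite ?scale1r. Qed.

Lemma gaugeD x y : gauge K (x + y) <= gauge K x + gauge K y.
Proof.
apply: gauge_le_homothet => [|s st]; first by rewrite addr_ge0 ?gauge_ge0.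
set h := (s - (gauge K x + gauge K y)) / 2.
have h0 : 0 < h by rewrite divr_gt0 // subr_gt0.
have /gauge_lt_homothet /homothet0P [x' Kx' ->] : gauge K x < gauge K x + h.
  by rewrite ltrDl.
have /gauge_lt_homothet /homothet0P [y' Ky' ->] : gauge K y < gauge K y + h.
  by rewrite ltrDl.
set a := gauge K x + h; have a0 : 0 < a by rewrite ltr_wpDl ?gauge_ge0.
have s0 : 0 < s by apply: le_lt_trans st; rewrite addr_ge0 ?gauge_ge0.
have bE : gauge K y + h = s - a by rewrite /a /h; field.
apply/homothet0P; exists ((a / s) *: x' + (1 - a / s) *: y').
  apply: mem_convex_comb => //; first by rewrite divr_ge0 ?ltW.
  by rewrite ler_pdivrMr // mul1r -subr_ge0 -bE addr_ge0 ?gauge_ge0 ?ltW.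
rewrite bE scalerDr !scalerA mulrCA divff ?gt_eqF // mulr1; congr (_ + _ *: _).
by field; rewrite gt_eqF.
Qed.

Lemma gaugeZ c x : 0 <= c -> gauge K (c *: x) <= c * gauge K x.
Proof.
move=> c0; apply: gauge_le_homothet => [|s st]; first by rewrite mulr_ge0 ?gauge_ge0.
have s0 : 0 < s by apply: le_lt_trans st; rewrite mulr_ge0 ?gauge_ge0.
have [->|cn0] := eqVneq c 0.
  by apply/homothet0P; exists 0; rewrite ?scaler0 ?scale0r //; exact: interior_subset.
have cp : 0 < c by rewrite lt_neqAle eq_sym cn0.
have /gauge_lt_homothet /homothet0P [y Ky ->] : gauge K x < s / c.
  by rewrite ltr_pdivlMr // mulrC.
by apply/homothet0P; exists y; rewrite // scalerA mulrCA divff ?gt_eqF ?mulr1.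
Qed.

Lemma gauge_subr_normalized w1 w2 :
  0 < gauge K w2 -> gauge K w2 <= gauge K w1 ->
  gauge K (w1 - w2) <=
    gauge K w2 * gauge K ((gauge K w1)^-1 *: w1 - (gauge K w2)^-1 *: w2)
    + (gauge K w1 - gauge K w2).
Proof.
set n1 := gauge K w1; set n2 := gauge K w2 => n2_gt0 n21.
have n1_gt0 : 0 < n1 by apply: lt_le_trans n21.
have -> : w1 - w2 = n2 *: (n1^-1 *: w1 - n2^-1 *: w2) + ((n1 - n2) / n1) *: w1.
  rewrite scalerBr !scalerA divff ?gt_eqF // scale1r addrAC -scalerDl.
  have -> : n2 / n1 + (n1 - n2) / n1 = 1 by field; rewrite gt_eqF.
  by rewrite scale1r.
have c_ge0 : 0 <= (n1 - n2) / n1 by rewrite divr_ge0 ?subr_ge0 // ltW.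
apply: le_trans (gaugeD _ _) _; apply: lerD; first exact: gaugeZ _ (ltW n2_gt0).
by apply: le_trans (gaugeZ _ c_ge0) _; rewrite divfK ?gt_eqF.
Qed.

Lemma gauge_opp_center v lam eps : 0 <= lam -> 0 <= eps ->
  ~ homothet v lam (interior K) 0 ->
  homothet v lam K `&` homothet 0 (- eps) K !=set0 ->
  lam <= gauge K (- v) <= lam + eps.
Proof.
move=> lam0 eps0 notin [z [[k Kk <-] /homothet0P [k' Kk' zE]]].
apply/andP; split.
  by apply: gauge_ge => vK; apply: notin; apply/homothetE; rewrite sub0r.
have -> : - v = lam *: k + eps *: k'.
  by rewrite -[eps *: k']opprK -scaleNr -zE opprD addrCA subrr addr0.
apply: le_trans (gaugeD _ _) _; apply: lerD; apply: le_trans (gaugeZ _ _) _ => //.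
  by rewrite ler_piMr // gauge_le1.
by rewrite ler_piMr // gauge_le1.
Qed.

Lemma gauge_normalized_diff_ge w1 w2 lam eps : 0 <= eps ->
  1 <= gauge K w2 -> gauge K w2 <= gauge K w1 -> gauge K w1 <= lam + eps ->
  ~ homothet 0 lam (interior K) (w1 - w2) ->
  1 - eps <= gauge K ((gauge K w1)^-1 *: w1 - (gauge K w2)^-1 *: w2).
Proof.
move=> eps0 n2_ge1 n21 n1_le /gauge_ge lam_le.
have := gauge_subr_normalized (lt_le_trans ltr01 n2_ge1) n21.
set g := gauge K (_ - _) => sub_le.
nra.
Qed.

End ConvexGauge.

Theorem lemma21 (R : realType) (d : nat) (K : set 'rV[R]_d) (eps : R)
    (v1 v2 : 'rV[R]_d) (lam1 lam2 : R) :
  convex_body K -> interior K 0 -> 0 <= eps ->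
  1 <= lam1 -> 1 <= lam2 ->
  ~ homothet v2 lam2 (interior K) v1 ->
  ~ homothet v1 lam1 (interior K) v2 ->
  ~ homothet v1 lam1 (interior K) 0 ->
  ~ homothet v2 lam2 (interior K) 0 ->
  homothet v1 lam1 K `&` homothet 0 (- eps) K !=set0 ->
  homothet v2 lam2 K `&` homothet 0 (- eps) K !=set0 ->
  gauge (K `&` homothet 0 (-1) K)
    ((gauge K (- v1))^-1 *: (- v1) - (gauge K (- v2))^-1 *: (- v2)) >= 1 - eps.
Proof.
move=> [_ [convK _]] K0 eps0 lam1_ge1 lam2_ge1 v1_notin v2_notin o_notin1 o_notin2
  meet1 meet2.
have /andP [lam1_le n1_le] :=
  gauge_opp_center convK K0 (le_trans ler01 lam1_ge1) eps0 o_notin1 meet1.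
have /andP [lam2_le n2_le] :=
  gauge_opp_center convK K0 (le_trans ler01 lam2_ge1) eps0 o_notin2 meet2.
have gap12 : ~ homothet 0 lam1 (interior K) (- v1 - - v2).
  by rewrite opprK addrC => v21; apply: v2_notin; apply/homothetE.
have gap21 : ~ homothet 0 lam2 (interior K) (- v2 - - v1).
  by rewrite opprK addrC => v12; apply: v1_notin; apply/homothetE.
apply: le_trans (gauge_symmetric_part_ge _ K0); rewrite le_max.
have [n21|n12] := leP (gauge K (- v2)) (gauge K (- v1)).
  by rewrite (gauge_normalized_diff_ge convK K0 eps0 _ n21 n1_le gap12) ?(le_trans lam2_ge1).
rewrite opprB (gauge_normalized_diff_ge convK K0 eps0 _ (ltW n12) n2_le gap21) ?orbT //.
exact: le_trans lam1_ge1 lam1_le.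
Qed.
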